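(* Let $C$ be a reduced singular plane curve of degree $d$ in $\mathbb{P}^2_{\mathbb{K}}$ ($\mathbb{K}$ algebraically closed), and let $T$ be the set of singular points of $C$. Then $H(C)<-1$ if and only if $|T|>0$ and $H(C,T)<-1$; and in this case $H(C)=H(C,U)$ for some nonempty subset $U\subseteq T$.
   Context: For a reduced plane curve $C$ of degree $d$ and a nonempty finite set $S\subseteq\mathbb{P}^2$, $H(C,S)=\frac{d^2-\sum_{p\in S}(\mathrm{mult}_pC)^2}{|S|}$, where $\mathrm{mult}_pC$ is the largest $k$ such that the defining form of $C$ lies in $I(p)^k$ (so it is $0$ for $p\notin C$). $H(C)=\inf\{H(C,S): S\subseteq\mathbb{P}^2,\ 0<|S|<\infty\}$. *)

From HB Require Import structures.
From Stdlib Require Import ClassicalEpsilon.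
From mathcomp Require Import all_boot all_order all_algebra.
From mathcomp Require Import mpoly.
From mathcomp Require Import classical_sets reals ereal.
From mathcomp Require Import Rstruct.

Set Implicit Arguments.
Unset Strict Implicit.
Unset Printing Implicit Defensive.

Import Order.TTheory GRing.Theory Num.Theory.
Local Open Scope ring_scope.

Notation plform K := (mpoly.mpoly 3 K).

Section PlaneCurves.
Variable K : closedFieldType.

(* A point of P^2 is represented by its normalized homogeneous coordinates:
   the first nonzero coordinate equals 1.  This gives a bijection between
   such vectors and the points of P^2. *)
Definition normalized (v : 'rV[K]_3) : bool :=
  [exists i : 'I_3, (v ord0 i == 1) && [forall j : 'I_3, (j < i)%N ==> (v ord0 j == 0)]].

Definition P2point := {v : 'rV[K]_3 | normalized v}.

Definition eval_at (f : plform K) (p : P2point) (c : K) : K :=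
  mpoly.meval (fun i : 'I_3 => c * (val p) ord0 i) f.

(* I(p): the ideal of polynomials vanishing at (every representative of) p,
   i.e. on the line through the origin corresponding to p. *)
Definition in_Ip (f : plform K) (p : P2point) : Prop := forall c : K, eval_at f p c = 0.

Definition in_Ip_pow (F : plform K) (p : P2point) (k : nat) : Prop :=
  exists (n : nat) (g : 'I_n -> plform K) (h : 'I_n -> 'I_k -> plform K),
    (forall i j, in_Ip (h i j) p) /\ F = \sum_(i < n) g i * \prod_(j < k) h i j.

(* mult_p C: the largest k with F in I(p)^k (well defined for F != 0;
   it is 0 when p is not on C). *)
Definition mult (F : plform K) (p : P2point) : nat :=
  epsilon (inhabits 0%N) (fun k => in_Ip_pow F p k /\ ~ in_Ip_pow F p k.+1).

Definition singular_point (F : plform K) (p : P2point) : Prop := (2 <= mult F p)%N.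

Definition reduced (F : plform K) : Prop :=
  forall g h : plform K, F = g * g * h -> (mpoly.msize g <= 1)%N.

Definition plane_curve (F : plform K) (d : nat) : Prop :=
  F != 0 /\ F \is mpoly.ishomog1 d mpoly.mdeg.

Definition Hloc (F : plform K) (d : nat) (S : seq P2point) : rat :=
  ((d ^ 2)%:R - (\sum_(p <- S) (mult F p ^ 2)%N)%:R) / (size S)%:R.

Definition finite_nonempty (S : seq P2point) : Prop := uniq S /\ S != [::].

Definition Hglob (F : plform K) (d : nat) : \bar Rdefinitions.R :=
  ereal_inf [set ((ratr (Hloc F d S) : Rdefinitions.R)%:E) | S in finite_nonempty].

End PlaneCurves.

From HB Require Import structures.
From mathcomp Require Import all_boot all_order all_algebra.
From mathcomp Require Import mpoly.
From mathcomp Require Import classical_sets reals ereal.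
From mathcomp Require Import Rstruct.
From mathcomp Require Import lra.
Import Order.TTheory GRing.Theory Num.Theory.
Local Open Scope ring_scope.
Set Implicit Arguments.
Unset Strict Implicit.

(* Only the multiplicities m_p matter.  H(C, U + V) is a weighted
   mean of H(C, U) and of the average of -m_p^2 over V, which is >= -1 when V
   avoids the singular set T and <= -1 when V lies on C.  Hence an S with
   H(C,S) < -1 can be shrunk to the nonempty S \cap T without raising H, and
   S \cap T can be enlarged to T keeping H < -1.  Below -1 the infimum H(C) is
   thus a minimum over the finitely many nonempty subsets of T. *)

Lemma exists_subseq_min (X : eqType) (R : realDomainType) (f : seq X -> R)
    (T : seq X) :
  T != [::] ->
  exists2 U, (U != [::]) && subseq U T &
    forall V, V != [::] -> subseq V T -> f U <= f V.
Proof.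
move=> T0; pose P (b : (size T).-tuple bool) := mask b T != [::].
have PT : P (nseq_tuple (size T) true) by rewrite /P /= mask_true.
case: (arg_minP (fun b : (size T).-tuple bool => f (mask b T)) PT) => b Pb b_min.
exists (mask b T); first by rewrite mask_subseq andbT.
move=> V V0 /subseqP[c /eqP szc eqV]; rewrite eqV in V0 *.
exact: (b_min (Tuple szc) V0).
Qed.

Section HarbourneConstant.
Variables (X : eqType) (d : nat) (m : X -> nat).

Definition Hval (U : seq X) : rat :=
  ((d ^ 2)%:R - (\sum_(p <- U) (m p ^ 2)%N)%:R) / (size U)%:R.

Lemma Hval_perm U V : perm_eq U V -> Hval U = Hval V.
Proof. by move=> pUV; rewrite /Hval (perm_big _ pUV) (perm_size pUV). Qed.

Lemma Hval_lt_m1_neq0 U : Hval U < -1 -> U != [::].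
Proof. by apply: contraTneq => ->; rewrite /Hval /= invr0 mulr0 ltr0N1. Qed.

Lemma Hval_cat_le U V :
    (forall p, p \in V -> (m p <= 1)%N) -> Hval (U ++ V) < -1 ->
  U != [::] /\ Hval U <= Hval (U ++ V).
Proof.
rewrite /Hval big_cat size_cat => m_le1.
have sum_le : (\sum_(p <- V) (m p ^ 2)%N <= size V)%N.
  rewrite -sum1_size big_seq [leqRHS]big_seq; apply: leq_sum => p /m_le1.
  by case: (m p) => [|[]].
move: sum_le; set a := \sum_(p <- U) _; set b := \sum_(p <- V) _.
set n := size U; set k := size V => sum_le.
have b_le_k : (b%:R <= k%:R :> rat) by rewrite ler_nat.
move=> lt_m1; have [n0|n_gt0] := posnP n.
  have a0 : a = 0%N by rewrite /a; move/size0nil: n0 => ->; rewrite big_nil.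
  move: lt_m1; rewrite n0 a0 add0n natrD => lt_m1; exfalso.
  have [k0|k_gt0] := posnP k; first by move: lt_m1; rewrite k0 invr0 mulr0; lra.
  move: lt_m1; rewrite ltr_pdivrMr ?ltr0n //.
  have : (0 <= (d ^ 2)%:R :> rat) by []; lra.
split; first by rewrite -size_eq0 -lt0n.
have nk_gt0 : (0 < (n + k)%:R :> rat) by rewrite ltr0n addn_gt0 n_gt0.
move: lt_m1; rewrite ltr_pdivrMr // => lt_m1.
rewrite ler_pdivlMr // mulrAC ler_pdivrMr ?ltr0n //.
rewrite !natrD in lt_m1 *.
have : (0 <= k%:R :> rat) by [].
have : (0 < n%:R :> rat) by rewrite ltr0n.
nra.
Qed.

Lemma Hval_cat_lt U V :
    U != [::] -> (forall p, p \in V -> (0 < m p)%N) -> Hval U < -1 ->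
  Hval (U ++ V) < -1.
Proof.
rewrite /Hval big_cat size_cat -size_eq0 -lt0n => n_gt0 m_gt0.
have sum_ge : (size V <= \sum_(p <- V) (m p ^ 2)%N)%N.
  rewrite -sum1_size big_seq [leqRHS]big_seq; apply: leq_sum => p /m_gt0 mp_gt0.
  by rewrite expn_gt0 mp_gt0.
move: sum_ge n_gt0; set a := \sum_(p <- U) _; set b := \sum_(p <- V) _.
set n := size U; set k := size V => sum_ge n_gt0.
have k_le_b : (k%:R <= b%:R :> rat) by rewrite ler_nat.
rewrite !ltr_pdivrMr ?ltr0n ?addn_gt0 ?n_gt0 // !natrD; lra.
Qed.

Variable T : seq X.
Hypotheses (uniq_T : uniq T)
  (m_le1 : forall p, p \notin T -> (m p <= 1)%N)
  (m_gt0 : forall p, p \in T -> (0 < m p)%N).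

Lemma Hval_restrict S :
  uniq S -> Hval S < -1 ->
  exists2 U, (U != [::]) && subseq U T & Hval U <= Hval S.
Proof.
move=> uniq_S lt_m1; set U := [seq p <- T | p \in S].
have SU : perm_eq [seq p <- S | p \in T] U.
  by apply: uniq_perm; rewrite ?filter_uniq // => p; rewrite !mem_filter andbC.
have S_split := Hval_perm (permEl (perm_filterC (mem T) S)).
rewrite -S_split in lt_m1 *; have [|U0 le_S] := Hval_cat_le _ lt_m1.
  by move=> p; rewrite mem_filter => /andP[/m_le1].
exists U; first by rewrite filter_subseq andbT -size_eq0 -(perm_size SU) size_eq0.
by rewrite -(Hval_perm SU).
Qed.

Lemma Hval_extend U :
  U != [::] -> subseq U T -> Hval U < -1 -> Hval T < -1.
Proof.
move=> U0 sUT lt_m1.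
have UT : perm_eq U [seq p <- T | p \in U].
  apply: uniq_perm; rewrite ?filter_uniq ?(subseq_uniq sUT) // => p.
  by rewrite mem_filter andb_idr // => /(mem_subseq sUT).
have T_split : perm_eq (U ++ [seq p <- T | predC (mem U) p]) T.
  by apply: perm_trans (permEl (perm_filterC (mem U) T)); rewrite perm_cat2r.
rewrite -(Hval_perm T_split) Hval_cat_lt // => p.
by rewrite mem_filter => /andP[_ /m_gt0].
Qed.

Lemma Hval_min_subseq :
  Hval T < -1 ->
  exists2 U, (U != [::]) && subseq U T &
    forall S, uniq S -> S != [::] -> Hval U <= Hval S.
Proof.
move=> lt_m1; have T0 := Hval_lt_m1_neq0 lt_m1.
have [U /andP[U0 sUT] U_min] := exists_subseq_min Hval T0.
exists U => [|S uniq_S S0]; first by rewrite U0.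
have [ltS|] := ltP (Hval S) (-1).
  have [V /andP[V0 sVT] le_VS] := Hval_restrict uniq_S ltS.
  exact: le_trans (U_min V V0 sVT) le_VS.
by apply: le_trans; rewrite ltW // (le_lt_trans (U_min T T0 _)).
Qed.

End HarbourneConstant.

Lemma lte_ratr_m1 (R : realFieldType) (x : rat) :
  ((ratr x : R)%:E < (-1)%:E)%E = (x < -1).
Proof. by rewrite lte_fin -(rmorphN1 (ratr : {rmorphism rat -> R})) ltr_rat. Qed.

Section GlobalConstant.
Variables (K : closedFieldType) (F : plform K) (d : nat) (T : seq (P2point K)).
Hypotheses (uniq_T : uniq T)
  (mult_le1 : forall p, p \notin T -> (mult F p <= 1)%N)
  (mult_gt0 : forall p, p \in T -> (0 < mult F p)%N).

Lemma Hglob_le_Hloc S :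
  uniq S -> S != [::] ->
  (Hglob F d <= ((ratr (Hloc F d S) : Rdefinitions.R)%:E))%E.
Proof. by move=> uniq_S S0; apply: ereal_inf_lbound; exists S. Qed.

Lemma Hglob_lt_m1 : (Hglob F d < (-1)%:E)%E <-> Hloc F d T < -1.
Proof.
split=> [|ltT]; last first.
  by rewrite (le_lt_trans (Hglob_le_Hloc uniq_T (Hval_lt_m1_neq0 ltT))) ?lte_ratr_m1.
case/ereal_inf_lt => _ [S [uniq_S _] <-]; rewrite lte_ratr_m1 => ltS.
have [U /andP[U0 sUT] le_US] := Hval_restrict uniq_T mult_le1 uniq_S ltS.
by apply: (Hval_extend uniq_T mult_gt0 U0 sUT); apply: le_lt_trans ltS.
Qed.

Lemma Hglob_min_subseq :
  Hloc F d T < -1 ->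
  exists2 U, (U != [::]) && subseq U T &
    Hglob F d = ((ratr (Hloc F d U) : Rdefinitions.R)%:E).
Proof.
move=> /(Hval_min_subseq uniq_T mult_le1) [U /andP[U0 sUT] U_min].
exists U; first by rewrite U0.
apply/le_anti/andP; split.
  exact: Hglob_le_Hloc (subseq_uniq sUT uniq_T) U0.
apply/ereal_infP => _ [S [uniq_S S0] <-].
by rewrite lee_fin ler_rat; apply: U_min.
Qed.

End GlobalConstant.

Theorem theorem2p20 (K : closedFieldType) (F : plform K) (d : nat)
  (T : seq (P2point K)) :
  plane_curve F d -> reduced F ->
  (exists p, singular_point F p) ->
  uniq T -> (forall p, p \in T <-> singular_point F p) ->
  ((Hglob F d < (-1)%:E)%E <-> (T != [::] /\ Hloc F d T < -1)) /\
  ((Hglob F d < (-1)%:E)%E ->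
     exists U : seq (P2point K),
       [/\ uniq U, U != [::], {subset U <= T} &
           Hglob F d = ((ratr (Hloc F d U) : Rdefinitions.R)%:E)]).
Proof.
move=> _ _ _ uniq_T T_sing.
have mult_le1 p : p \notin T -> (mult F p <= 1)%N.
  by rewrite leqNgt; apply: contra => /T_sing.
have mult_gt0 p : p \in T -> (0 < mult F p)%N by move/T_sing; apply: leq_trans.
have Hglob_lt := Hglob_lt_m1 d uniq_T mult_le1 mult_gt0.
split.
  rewrite Hglob_lt; split=> [ltT|[]//]; split=> //.
  exact: Hval_lt_m1_neq0 ltT.
move=> /Hglob_lt /(Hglob_min_subseq uniq_T mult_le1) [U /andP[U0 sUT] ->].
by exists U; split=> //; [exact: subseq_uniq sUT uniq_T | exact: mem_subseq].
Qed.
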